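(* Let $\mathbb{L}/\mathbb{K}$ be a finite Galois extension of degree $N$ with Galois group $G=\{g_1,\dots,g_N\}$, $g_1=\mathrm{Id}$, and let $\alpha$ be a primitive element of $\mathbb{L}/\mathbb{K}$. Regard $\mathbb{L}\otimes_\mathbb{K}\mathbb{L}$ as an $\mathbb{L}$-vector space via the left factor, so that for any $\mathbb{K}$-linear $f:\mathbb{L}\to\mathbb{L}$ the map $\mathrm{Id}\otimes f$ is $\mathbb{L}$-linear. Let $m_\alpha:\mathbb{L}\to\mathbb{L}$, $x\mapsto\alpha x$, and choose a nonzero $v\in\mathbb{L}\otimes_\mathbb{K}\mathbb{L}$ with $(\mathrm{Id}\otimes m_\alpha)(v)=\alpha\cdot v$. For $g\in G$ set $v_g=(\mathrm{Id}\otimes g^{-1})(v)$. Then each $v_g$ is an eigenvector of $\mathrm{Id}\otimes m_\alpha$ with eigenvalue $g(\alpha)$, $(\mathrm{Id}\otimes g)(v_h)=v_{hg^{-1}}$ for all $g,h\in G$, $(v_{g_1},\dots,v_{g_N})$ is an $\mathbb{L}$-basis of $\mathbb{L}\otimes_\mathbb{K}\mathbb{L}$, and for every $a\in\mathbb{L}[G]$ the matrix of $\mathrm{Id}\otimes a$ in the basis $(v_{g_1},\dots,v_{g_N})$ equals $D_G(a)^\top$. Moreover, $D_G(a)$ is the matrix, in the $\mathbb{L}$-basis $(g_1,\dots,g_N)$ of $\mathbb{L}[G]$, of the $\mathbb{L}$-linear map $\mathbb{L}[G]\to\mathbb{L}[G]$, $f\mapsto f\circ a$.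
   Context: $\mathbb{L}[G]=\{\sum_ga_gg:a_g\in\mathbb{L}\}$ with composition product $(ag)\circ(bh)=(a\,g(b))(gh)$ extended by distributivity; $a=\sum a_gg$ acts on $\mathbb{L}$ as the $\mathbb{K}$-linear map $x\mapsto\sum a_gg(x)$. The $G$-Dickson matrix $D_G(a)$ has rows and columns indexed by $g_1,\dots,g_N$ and entries $D_G(a)_{g,h}=h(a_{h^{-1}g})$. Matrices of linear maps have as columns the coordinates of images of basis vectors. *)

From HB Require Import structures.
From mathcomp Require Import all_boot all_order all_algebra all_fingroup all_field.
Set Implicit Arguments. Unset Strict Implicit. Unset Printing Implicit Defensive.
Import GRing.Theory.
Local Open Scope ring_scope.

(* Paper's K is the base field F; paper's L is the splitting field type L
   (the full space {:L}); G = 'Gal({:L} / 1). *)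
Section GaloisTensor.
Variables (F : fieldType) (L : splittingFieldType F).

Notation Gt := (gal_of (fullv : {vspace L})).

(* paper composition  g o h  (apply h first);  in mathcomp (h * g) x = g (h x) *)
Definition gcomp (g h : Gt) : Gt := (h * g)%g.

(* Model of L (x)_K L : the free L-module on a K-basis (vbasis {:L}) of the
   right factor, i.e. row vectors of length \dim {:L} over L.
   The L-structure is the left factor. *)
Definition tdim := \dim (fullv : {vspace L}).
Definition tensT := 'rV[L]_tdim.

(* pure tensor x (x) y *)
Definition tens (x y : L) : tensT :=
  \row_i (x * (coord (vbasis (fullv : {vspace L})) i y)%:A).

(* Id (x) f  (for a K-linear f : L -> L): the L-linear map sending
   x (x) e_i to x (x) f e_i, with e = vbasis {:L} *)
Definition idtens (f : L -> L) (v : tensT) : tensT :=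
  \sum_(i < tdim) v 0 i *: tens 1 (f (vbasis (fullv : {vspace L}))`_i).

Definition mulL (a : L) : L -> L := fun x => a * x.

(* group algebra L[G]: a = sum_g a_g g, coefficients a_g = a g *)
Definition galgT := {ffun Gt -> L^o}.

Definition gdelta (g : Gt) : galgT := [ffun k => (k == g)%:R].

Definition galg_act (a : galgT) : L -> L :=
  fun x => \sum_(g in 'Gal(fullv / 1%VS)%g) a g * g x.

(* composition product (a g) o (b h) = (a g(b)) (g o h) *)
Definition galg_comp (a b : galgT) : galgT :=
  \sum_(g in 'Gal(fullv / 1%VS)%g) \sum_(h in 'Gal(fullv / 1%VS)%g)
     (a g * g (b h)) *: gdelta (gcomp g h).

Definition DickG (N : nat) (gs : 'I_N -> Gt) (a : galgT) : 'M[L]_N :=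
  \matrix_(i, j) (gs j) (a (gcomp (gs j)^-1%g (gs i))).

End GaloisTensor.

Definition tvg (F : fieldType) (L : splittingFieldType F) (v : tensT L)
  (g : gal_of (fullv : {vspace L})) : tensT L :=
  idtens (fun x => (g^-1)%g x) v.

From HB Require Import structures.
From mathcomp Require Import all_boot all_order all_algebra all_fingroup all_field.
Set Implicit Arguments. Unset Strict Implicit. Unset Printing Implicit Defensive.
Import GRing.Theory.
Local Open Scope ring_scope.

(* The tensor product L (x)_K L is modelled by row vectors over L indexed by a
   K-basis e of L, and Id (x) f acts as right multiplication by the matrix
   [idtens_mx f] whose i-th row holds the coordinates of f e_i.

   Section Eigenvectors: since alpha generates L over K, the eigenvector
   equation for m_alpha propagates to every m_beta, i.e.
   (Id (x) m_beta) v = beta v; conjugating by Id (x) g^-1 gives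
   (Id (x) m_beta) v_g = g(beta) v_g, and G permutes the family (v_g).

   Section GaloisGroup: eigenvectors whose eigenvalue maps are distinct
   automorphisms are free by Dedekind's independence of characters; there are
   |G| = [L : K] of the v_g, the L-dimension of L (x)_K L, so they form a
   basis.  Expanding Id (x) a = sum_k a_k m (Id (x) k) on v_h and reindexing
   over G gives the columns of D_G(a)^T, and computing the coefficients of
   g_j o a in L[G] gives D_G(a). *)

Section IdTensor.
Variables (F : fieldType) (L : splittingFieldType F).
Local Notation e := (vbasis (fullv : {vspace L})).

Definition idtens_mx (f : L -> L) : 'M[L]_(tdim L) :=
  \matrix_(i, j) (coord e j (f e`_i))%:A.

Lemma idtensE (f : L -> L) (w : tensT L) : idtens f w = w *m idtens_mx f.
Proof.
apply/rowP=> j; rewrite /idtens summxE !mxE; apply: eq_bigr => i _.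
by rewrite !mxE mul1r.
Qed.

Lemma idtens_ext (f g : L -> L) (w : tensT L) :
  f =1 g -> idtens f w = idtens g w.
Proof. by move=> fg; apply: eq_bigr => i _; rewrite fg. Qed.

Lemma idtensZ (f : L -> L) c (w : tensT L) : idtens f (c *: w) = c *: idtens f w.
Proof. by rewrite !idtensE scalemxAl. Qed.

Lemma idtens0 (f : L -> L) : idtens f 0 = 0.
Proof. by rewrite idtensE mul0mx. Qed.

Lemma idtens_sum (f : L -> L) (I : finType) (P : pred I) (w : I -> tensT L) :
  idtens f (\sum_(i | P i) w i) = \sum_(i | P i) idtens f (w i).
Proof. by rewrite idtensE mulmx_suml; apply: eq_bigr => i _; rewrite idtensE. Qed.

Lemma idtens_id (w : tensT L) : idtens id w = w.
Proof.
rewrite idtensE -[RHS]mulmx1; congr (_ *m _); apply/matrixP => i j.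
by rewrite !mxE coord_free ?(basis_free (vbasisP _)) // scaler_nat eq_sym.
Qed.

Lemma idtens_comp (f : 'End(L)) (g : L -> L) (w : tensT L) :
  idtens f (idtens g w) = idtens (fun x => f (g x)) w.
Proof.
rewrite !idtensE -mulmxA; congr (_ *m _); apply/matrixP => i j; rewrite !mxE.
rewrite [in RHS](coord_vbasis (memvf (g e`_i))) !linear_sum /= scaler_suml.
by apply: eq_bigr => k _; rewrite !mxE !linearZ /= mulr_algl scalerA.
Qed.

Lemma idtens_sumf (I : finType) (P : pred I) (f : I -> L -> L) (w : tensT L) :
  idtens (fun x => \sum_(k | P k) f k x) w = \sum_(k | P k) idtens (f k) w.
Proof.
rewrite idtensE; under eq_bigr do rewrite idtensE.
rewrite -mulmx_sumr; congr (_ *m _); apply/matrixP => i j.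
rewrite summxE !mxE linear_sum scaler_suml; apply: eq_bigr => k _.
by rewrite mxE.
Qed.

Lemma idtens_mulL_comp c (f : L -> L) (w : tensT L) :
  idtens (fun x => c * f x) w = idtens (mulL c) (idtens f w).
Proof.
transitivity (idtens (amull c) (idtens f w)); last first.
  by apply: idtens_ext => x; rewrite lfunE.
by rewrite idtens_comp; apply: idtens_ext => x; rewrite lfunE.
Qed.

Lemma idtens_mulL_scalar (c : F) (w : tensT L) : idtens (mulL c%:A) w = c%:A *: w.
Proof.
rewrite -[in RHS](idtens_id w) !idtensE scalemxAr; congr (_ *m _).
apply/matrixP => i j; rewrite !mxE /mulL mulr_algl !linearZ /=.
by rewrite mulr_algl scalerA mulrC.
Qed.

Lemma idtens_mulLD x y (w : tensT L) :
  idtens (mulL (x + y)) w = idtens (mulL x) w + idtens (mulL y) w.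
Proof.
rewrite !idtensE -mulmxDr; congr (_ *m _); apply/matrixP => i j.
by rewrite !mxE /mulL mulrDl linearD /= scalerDl.
Qed.

Lemma idtens_mulLM x y (w : tensT L) :
  idtens (mulL (x * y)) w = idtens (mulL x) (idtens (mulL y) w).
Proof. by rewrite -idtens_mulL_comp; apply: idtens_ext => z; rewrite /mulL mulrA. Qed.

End IdTensor.

Section Eigenvectors.
Variables (F : fieldType) (L : splittingFieldType F).
Local Notation Gt := (gal_of (fullv : {vspace L})).

(* If v is an eigenvector of Id (x) m_alpha with eigenvalue alpha and alpha
   generates L over K, then (Id (x) m_beta) v = beta v for every beta: the set
   of such beta contains K and alpha and is closed under + and *. *)
Lemma eigen_primitive (alpha : L) (v : tensT L) :
    <<1%VS; alpha>>%VS = fullv -> idtens (mulL alpha) v = alpha *: v ->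
  forall beta, idtens (mulL beta) v = beta *: v.
Proof.
move=> Halpha Hv beta; pose S b := idtens (mulL b) v = b *: v.
have S_scalar c : S c%:A by rewrite /S idtens_mulL_scalar.
have S_add x y : S x -> S y -> S (x + y).
  by rewrite /S idtens_mulLD => -> ->; rewrite scalerDl.
have S_mul x y : S x -> S y -> S (x * y).
  by rewrite /S idtens_mulLM => Sx ->; rewrite idtensZ Sx scalerA mulrC.
have S_alphaX i : S (alpha ^+ i).
  elim: i => [|i IH]; first by rewrite expr0 -(scale1r 1); apply: S_scalar.
  by rewrite exprS; apply: S_mul.
have : beta \in <<1%VS; alpha>>%VS by rewrite Halpha memvf.
case/(Fadjoin_polyP (K := 1%AS)) => p Kp ->; rewrite horner_coef.
apply: (big_ind S) => [|//|i _]; first by rewrite -(scale0r (1 : L)).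
have /vlineP[c ->] : p`_i \in (1%VS : {vspace L}) by apply: (polyOverP Kp).
by apply: S_mul.
Qed.

(* Id (x) g^-1 intertwines m_beta with m_(g beta), so v_g is an eigenvector
   of every Id (x) m_beta with eigenvalue g(beta). *)
Lemma tvg_eigen (v : tensT L) (g : Gt) :
    (forall beta, idtens (mulL beta) v = beta *: v) ->
  forall beta, idtens (mulL beta) (tvg v g) = g beta *: tvg v g.
Proof.
move=> Hv beta; rewrite /tvg -idtens_mulL_comp -idtensZ -Hv.
rewrite (idtens_comp (g^-1)%g); apply: idtens_ext => x; rewrite /mulL rmorphM /=.
by rewrite -galM ?memvf // mulgV gal_id.
Qed.

Lemma tvg_act (v : tensT L) (g h : Gt) :
  idtens (fun x => g x) (tvg v h) = tvg v (gcomp h (g^-1)%g).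
Proof.
rewrite /tvg /gcomp (idtens_comp g); apply: idtens_ext => z.
by rewrite invMg invgK galM ?memvf.
Qed.

(* Each Id (x) g is invertible, hence v_g is nonzero when v is. *)
Lemma tvg_neq0 (v : tensT L) (g : Gt) : v != 0 -> tvg v g != 0.
Proof.
apply: contraNneq => vg0; have := tvg_act v g g.
rewrite vg0 idtens0 /gcomp mulVg /tvg invg1 => ->.
by rewrite (idtens_ext _ (g := id)) ?idtens_id // => x; rewrite gal_id.
Qed.

End Eigenvectors.

Section GaloisGroup.
Variables (F : fieldType) (L : splittingFieldType F).
Local Notation Gt := (gal_of (fullv : {vspace L})).
Local Notation G := 'Gal((fullv : {vspace L}) / 1%VS)%g.

(* Reading a fixed nonzero coordinate of the i-th vector turns a linear
   relation into a linear relation between the characters gs_l. *)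
Lemma gal_eigen_free N (gs : 'I_N -> Gt) (w : 'I_N -> tensT L) :
    injective gs -> (forall i, w i != 0) ->
    (forall i beta, idtens (mulL beta) (w i) = gs i beta *: w i) ->
  free [tuple w i | i < N].
Proof.
move=> gs_inj w_neq0 w_eigen; apply/freeP => k rel0 i.
have {}rel0 : \sum_(l < N) k l *: w l = 0.
  by apply: etrans rel0; apply: eq_bigr => l _; rewrite nth_mktuple.
have [j wij_neq0] : exists j, w i 0 j != 0.
  apply/existsP; apply: contraR (w_neq0 i) => /existsPn wi0.
  by apply/eqP/rowP => j; rewrite mxE; apply/eqP/negPn.
have rel_beta beta : \sum_(l < N) k l * w l 0 j * gs l beta = 0.
  have := congr1 (fun u : tensT L => idtens (mulL beta) u 0 j) rel0.
  rewrite idtens0 idtens_sum mxE summxE; apply: etrans; apply: eq_bigr => l _.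
  by rewrite idtensZ w_eigen scalerA !mxE mulrAC.
pose c g := \sum_(l | gs l == g) k l * w l 0 j.
suff : c (gs i) = 0.
  rewrite /c (big_pred1 i) => [/eqP|l]; last by rewrite inj_eq.
  by rewrite mulf_eq0 (negPf wij_neq0) orbF => /eqP.
apply: (@gal_independent _ _ _ predT c) => // beta _.
apply: etrans (rel_beta beta); rewrite [RHS](partition_big gs predT) //=.
by apply: eq_bigr => g _; rewrite mulr_suml; apply: eq_bigr => l /eqP <-.
Qed.

Lemma tdim_gal : galois 1%VS (fullv : {vspace L}) -> tdim L = #|G|.
Proof. by move/galois_dim; rewrite dimv1 divn1. Qed.

(* Expansion of Id (x) a on the family (v_g): with a = sum_k a_k k, the k-term
   sends v_h to a_k v_(k^-1 h) scaled by the eigenvalue, and reindexing by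
   g = k^-1 h gives  (Id (x) a) v_h = sum_g g(a_(h g^-1)) v_g. *)
Lemma idtens_galg_act (v : tensT L) (a : galgT L) (h : Gt) :
    (forall beta, idtens (mulL beta) v = beta *: v) -> h \in G ->
  idtens (galg_act a) (tvg v h)
    = \sum_(g in G) g (a (h * g^-1)%g) *: tvg v g.
Proof.
move=> v_eigen Gh; rewrite /galg_act idtens_sumf.
under eq_bigr do rewrite idtens_mulL_comp tvg_act (tvg_eigen _ v_eigen).
rewrite (reindex_inj (h := fun g => h * g^-1)%g) /=; last first.
  by move=> g1 g2 /mulgI /invg_inj.
apply: eq_big => [g | g _]; first by rewrite groupMl // groupV.
by rewrite /gcomp invMg invgK mulgKV.
Qed.

Lemma galg_comp_delta (a : galgT L) (h g : Gt) : h \in G -> g \in G ->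
  galg_comp (gdelta h) a g = h (a (gcomp (h^-1)%g g)).
Proof.
move=> Gh Gg; rewrite /galg_comp sum_ffunE (bigD1 h) //=.
rewrite [X in _ + X]big1 ?addr0 => [|k /andP[_ k_neq_h]]; last first.
  by rewrite sum_ffunE big1 // => l _; rewrite !ffunE (negPf k_neq_h) mul0r scale0r.
have Gk : (g * h^-1)%g \in G by rewrite groupM ?groupV.
rewrite sum_ffunE (bigD1 _ Gk) //= [X in _ + X]big1 ?addr0 => [|k /andP[_ k_neq]].
  by rewrite !ffunE /gcomp mulgKV !eqxx mul1r; apply: mulr1.
rewrite !ffunE /gcomp; suff -> : (g == k * h)%g = false by rewrite scaler0.
by apply: contraNF k_neq => /eqP ->; rewrite mulgK.
Qed.

End GaloisGroup.

Lemma enum_imset (T : finType) (G : {set T}) N (gs : 'I_N -> T) :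
    (forall i, gs i \in G) -> (forall g, g \in G -> exists i, gs i = g) ->
  G = gs @: setT.
Proof.
move=> gs_in gs_onto; apply/setP => g.
by apply/idP/imsetP => [/gs_onto[i <-]|[i _ ->]] //; exists i.
Qed.

Theorem mainTheorem7 (F : fieldType) (L : splittingFieldType F)
  (Hgal : galois 1%VS (fullv : {vspace L}))
  (N : nat) (gs : 'I_N -> gal_of (fullv : {vspace L}))
  (gs_inj : injective gs)
  (gs_in : forall i, gs i \in 'Gal(fullv / 1%VS)%g)
  (gs_onto : forall g, g \in 'Gal(fullv / 1%VS)%g -> exists i, gs i = g)
  (gs1 : forall i : 'I_N, nat_of_ord i = 0%N -> gs i = 1%g)
  (alpha : L) (Halpha : <<1%VS; alpha>>%VS = fullv)
  (v : tensT L) (vnz : v != 0)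
  (Hv : idtens (mulL alpha) v = alpha *: v) :
  let B := [tuple tvg v (gs i) | i < N] in
  [/\ (forall g, g \in 'Gal(fullv / 1%VS)%g ->
         idtens (mulL alpha) (tvg v g) = g alpha *: tvg v g),
      (forall g h, g \in 'Gal(fullv / 1%VS)%g -> h \in 'Gal(fullv / 1%VS)%g ->
         idtens (fun x => g x) (tvg v h) = tvg v (gcomp h (g^-1)%g)),
      basis_of fullv B,
      (forall a : galgT L,
         \matrix_(i < N, j < N) coord B i (idtens (galg_act a) (tvg v (gs j)))
           = (DickG gs a)^T)
    & (forall a : galgT L,
         \matrix_(i < N, j < N) (galg_comp (gdelta (gs j)) a) (gs i)
           = DickG gs a)].
Proof.
move=> B; have G_enum := enum_imset gs_in gs_onto.
have v_eigen := eigen_primitive Halpha Hv.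
have freeB : free B.
  by apply: gal_eigen_free gs_inj _ _ => i; [apply: tvg_neq0 | apply: tvg_eigen].
have sum_G_B (c : gal_of fullv -> L) :
    \sum_(g in 'Gal(fullv / 1%VS)%g) c g *: tvg v g = \sum_(l < N) c (gs l) *: B`_l.
  rewrite G_enum big_imset /=; last by move=> i j _ _ /gs_inj.
  by apply: eq_big => [l | l _]; rewrite ?in_setT ?nth_mktuple.
split.
- by move=> g _; apply: tvg_eigen.
- by move=> g h _ _; apply: tvg_act.
- rewrite basisEfree freeB subvf size_tuple dimvf /=.
  by rewrite [X in (X <= _)%N]mul1n (tdim_gal Hgal) G_enum card_imset // cardsT card_ord.
- move=> a; apply/matrixP => i j.
  by rewrite !mxE (idtens_galg_act _ v_eigen) // sum_G_B coord_sum_free.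
- by move=> a; apply/matrixP => i j; rewrite !mxE galg_comp_delta.
Qed.
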